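(* Let $q\ge2$ and let $U$ be a $q\times q$ row-stochastic matrix with strictly positive entries. There is a constant $C_3$ independent of $n$ such that for all sufficiently large $n$, every $\mathbf{x}\in[1:q]^n$ and every $a\ne b\in[1:q]$, $$d_{\mathrm{TV}}\big(W_{(\mathbf{x},a)},W_{(\mathbf{x},b)}\big)\le\frac{C_3(\log n)^{(q-2)/2}}{\sqrt n}.$$
   Context: For a vector $\mathbf{x}\in[1:q]^m$, $W_{\mathbf{x}}$ denotes the distribution of the composition $(N(1|\mathbf{Y}),\dots,N(q|\mathbf{Y}))$, $N(c|\mathbf{Y})=|\{i:Y_i=c\}|$, of the output $\mathbf{Y}$ when $\mathbf{x}$ is sent through $m$ independent uses of the DMC $U$ (i.e. $\Pr[\mathbf{Y}=\mathbf{y}]=\prod_iU(y_i|x_i)$). $(\mathbf{x},a)\in[1:q]^{n+1}$ denotes $\mathbf{x}$ with the symbol $a$ appended. $d_{\mathrm{TV}}(P,Q)=\frac12\sum|P-Q|$. Logarithms base 2. *)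

From HB Require Import structures.
From mathcomp Require Import all_boot all_order all_algebra.
From mathcomp Require Import reals exp.
Set Implicit Arguments. Unset Strict Implicit. Unset Printing Implicit Defensive.
Import Order.TTheory GRing.Theory Num.Theory.
Local Open Scope ring_scope.

Section Defs.
Variable R : realType.
Variable q : nat.
Variable U : 'M[R]_q.  (* U i j = U(j | i): transition probability input i -> output j *)

Definition chan_prob (m : nat) (x y : m.-tuple 'I_q) : R :=
  \prod_(i < m) U (tnth x i) (tnth y i).

Definition composition (m : nat) (y : m.-tuple 'I_q) (c : 'I_q) : nat :=
  count_mem c y.

Definition W (m : nat) (x : m.-tuple 'I_q) (k : 'I_q -> nat) : R :=
  \sum_(y : m.-tuple 'I_q | [forall c, composition y c == k c]) chan_prob x y.

(* total variation distance between W_x and W_x'; every composition of a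
   length-m word has all counts <= m, so summing over k : 'I_q -> 'I_(m.+1)
   covers the whole support. *)
Definition dTV_W (m : nat) (x x' : m.-tuple 'I_q) : R :=
  2^-1 * \sum_(k : {ffun 'I_q -> 'I_(m.+1)})
           `|W x (fun c => nat_of_ord (k c)) - W x' (fun c => nat_of_ord (k c))|.
End Defs.

Definition log2 {R : realType} (x : R) : R := ln x / ln 2.

From HB Require Import structures.
From mathcomp Require Import all_boot all_order all_algebra.
From mathcomp Require Import reals exp.
From mathcomp Require Import ring lra.
Import Order.TTheory GRing.Theory Num.Theory.
Local Open Scope ring_scope.
Set Implicit Arguments. Unset Strict Implicit. Unset Printing Implicit Defensive.

(** Encode a composition [k] of a word of length [m < B] by the integer
    [\sum_c k c * B ^ c]. Then [W_x] is the coefficient sequence of [\prod_i P_(x_i)],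
    where [P_e = \sum_c U e c *: 'X^(B ^ c)], so [d_TV] is at most half the l1 norm of a
    coefficient difference. As the rows of [U] sum to 1, [P_a - P_b] is a combination of
    total weight at most 2 of binomials [u - v] with [u = 'X^(B ^ c)], [v = 'X^(B ^ a)].
    If [2 d] is the smallest entry of [U], every [P_e] dominates [d (u + v)]; expanding the
    product over the set [J] of factors that contribute this part bounds the l1 norm of
    [(u - v) \prod_i P_(x_i)] by the mean, over [#|J| ~ Bin(n, 2 d)], of [2 ^- #|J|] times
    the l1 norm of [(u - v) (u + v) ^+ #|J|]. AM-GM and the variance of the binomial law
    bound the latter by [t / (#|J| + 1) + 1 / t] for any [t > 0], and
    [E[1 / (#|J| + 1)] <= 1 / ((n + 1) 2 d)]. With [t = sqrt n] this gives
    [d_TV = O(1 / sqrt n)]; the logarithmic factor of the statement is at least 1. *)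

Lemma sum_set_card (I : finType) (V : nmodType) (F : nat -> V) :
  \sum_(J : {set I}) F #|J| = \sum_(s < #|I|.+1) F s *+ 'C(#|I|, s).
Proof.
rewrite (partition_big (fun J : {set I} => inord #|J| : 'I_#|I|.+1) predT) //=.
apply: eq_bigr => s _; rewrite -card_draws -sumr_const.
apply: eq_big => [J|J /eqP <-]; last by rewrite inordK // ltnS max_card.
by rewrite inE -val_eqE /= inordK // ltnS max_card.
Qed.

Lemma prodrDl_set (T : comPzSemiRingType) (I : finType) (x : T) (F : I -> T) :
  \prod_i (x + F i) = \sum_(J : {set I}) x ^+ #|J| * \prod_(i in ~: J) F i.
Proof.
rewrite bigA_distr; apply: eq_bigr => J _; rewrite (bigID (mem J)) /= -prodr_const.
congr (_ * _); first by apply: eq_bigr => i ->.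
by apply: eq_big => [i | i /negbTE ->]; rewrite ?inE.
Qed.

Section PolyNorm1.
Variable R : numDomainType.
Implicit Types (p r : {poly R}) (c : R).

Definition norm1 p : R := \sum_(i < size p) `|p`_i|.

Lemma norm1_widen p N : (size p <= N)%N -> norm1 p = \sum_(i < N) `|p`_i|.
Proof.
move=> leN; rewrite /norm1 (big_ord_widen N (fun i => `|p`_i|) leN) big_mkcond.
apply: eq_bigr => i _; case: ltnP => // /(nth_default 0) ->.
by rewrite normr0.
Qed.

Lemma norm1_ge0 p : 0 <= norm1 p.
Proof. exact: sumr_ge0. Qed.

Lemma norm1D p r : norm1 (p + r) <= norm1 p + norm1 r.
Proof.
pose N := maxn (size p) (size r).
rewrite (@norm1_widen (p + r) N) ?(leq_trans (size_polyD _ _)) //.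
rewrite (@norm1_widen p N) ?leq_maxl // (@norm1_widen r N) ?leq_maxr //.
by rewrite -big_split ler_sum // => i _; rewrite coefD ler_normD.
Qed.

Lemma norm1Z c p : norm1 (c *: p) = `|c| * norm1 p.
Proof.
rewrite (@norm1_widen _ (size p)) ?size_scale_leq // mulr_sumr.
by apply: eq_bigr => i _; rewrite coefZ normrM.
Qed.

Lemma norm1_sum (I : Type) (s : seq I) (P : pred I) (F : I -> {poly R}) :
  norm1 (\sum_(i <- s | P i) F i) <= \sum_(i <- s | P i) norm1 (F i).
Proof.
elim/big_ind2: _ => [|p1 x1 p2 x2 le1 le2|//]; first by rewrite /norm1 size_poly0 big_ord0.
exact: le_trans (norm1D _ _) (lerD le1 le2).
Qed.

Lemma norm1MXn p k : norm1 (p * 'X^k) = norm1 p.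
Proof.
rewrite (@norm1_widen _ (k + size p)); last first.
  by rewrite (leq_trans (size_polyMleq _ _)) // size_polyXn addnS addnC.
rewrite big_split_ord /= big1 ?add0r => [|i _]; last by rewrite coefMXn ltn_ord normr0.
by apply: eq_bigr => i _; rewrite coefMXn ltnNge leq_addr addKn.
Qed.

Lemma norm1Xn k : norm1 'X^k = 1.
Proof. by rewrite -['X^k]mul1r norm1MXn /norm1 size_poly1 big_ord1 coefC normr1. Qed.

Lemma norm1M p r : norm1 (p * r) <= norm1 p * norm1 r.
Proof.
rewrite -[r in p * r]coefK poly_def mulr_sumr /norm1 mulr_sumr.
apply: le_trans (norm1_sum _ _ _) _; apply: ler_sum => i _.
by rewrite -scalerAr norm1Z norm1MXn mulrC.
Qed.

Lemma norm1_nneg p : p \is a polyOver Num.nneg -> norm1 p = p.[1].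
Proof.
move=> /polyOverP p_ge0; rewrite horner_coef; apply: eq_bigr => i _.
by rewrite expr1n mulr1 ger0_norm // -nnegrE p_ge0.
Qed.

Lemma polyOver_nneg_prod (I : finType) (P : pred I) (F : I -> {poly R}) :
  (forall i, P i -> F i \is a polyOver Num.nneg) ->
  \prod_(i | P i) F i \is a polyOver Num.nneg.
Proof.
move=> F_ge0; apply: (big_ind (fun p => p \is a polyOver Num.nneg)) => //.
  by rewrite polyOverC nnegrE ler01.
move=> p r /polyOverP p_ge0 /polyOverP r_ge0; apply/polyOverP => i.
by rewrite coefM rpred_sum // => j _; apply: rpredM.
Qed.

Lemma sum_norm_coef_inj_le (K : finType) (phi : K -> nat) p :
  injective phi -> \sum_k `|p`_(phi k)| <= norm1 p.
Proof.
move=> phi_inj; pose N := maxn (size p) (\max_k (phi k).+1).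
have phiN k : (phi k < N)%N by rewrite leq_max (leq_bigmax k) orbT.
pose phi' k : 'I_N := Ordinal (phiN k).
have phi'_inj : injective phi' by move=> k1 k2 /(congr1 val) /phi_inj.
rewrite (@norm1_widen p N) ?leq_maxl //.
have -> : \sum_k `|p`_(phi k)| = \sum_(j in [set phi' k | k : K]) `|p`_j|.
  by rewrite big_imset; [apply: eq_bigl => k; rewrite inE | move=> k1 k2 _ _ /phi'_inj].
rewrite [X in _ <= X](bigID (mem [set phi' k | k : K])) /= lerDl sumr_ge0 //.
Qed.

End PolyNorm1.

Section BinomialSums.
Variable R : numFieldType.

Lemma sumr_bin N : \sum_(j < N.+1) 'C(N, j)%:R = 2 ^+ N :> R.
Proof. by rewrite -[2]/(1 + 1 : R) exprDn; under [RHS]eq_bigr do rewrite !expr1n mul1r. Qed.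

Lemma sumr_bin_succ N (f : nat -> R) :
  \sum_(j < N.+2) 'C(N.+1, j)%:R * f j = \sum_(j < N.+1) 'C(N, j)%:R * (f j + f j.+1).
Proof.
rewrite big_ord_recl bin0 mul1r.
under eq_bigr do rewrite binS natrD mulrDl.
rewrite big_split /= addrA.
under [RHS]eq_bigr do rewrite mulrDr.
rewrite big_split /= [in RHS]big_ord_recl bin0 mul1r; congr (_ + _ + _).
by rewrite big_ord_recr /= bin_small // mul0r addr0.
Qed.

Lemma sumr_bin_centered_sqr N :
  \sum_(j < N.+1) 'C(N, j)%:R * (2 * j%:R - N%:R) ^+ 2 = N%:R * 2 ^+ N :> R.
Proof.
elim: N => [|N IH]; first by rewrite big_ord1 /=; ring.
rewrite (sumr_bin_succ N (fun j : nat => (2 * j%:R - N.+1%:R) ^+ 2)) /=.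
transitivity (\sum_(j < N.+1) (2 * ('C(N, j)%:R * (2 * j%:R - N%:R) ^+ 2) + 2 * 'C(N, j)%:R) : R).
  by apply: eq_bigr => j _; rewrite -!natr1; ring.
by rewrite big_split -!mulr_sumr /= IH sumr_bin -natr1 exprS; ring.
Qed.

Lemma sumr_binomial_pmf_div_succ (p : R) n : 0 < p <= 1 ->
  \sum_(s < n.+1) 'C(n, s)%:R * p ^+ s * (1 - p) ^+ (n - s) / s.+1%:R <= (n.+1%:R * p)^-1.
Proof.
move=> /andP[p_gt0 p_le1]; have np_gt0 : 0 < n.+1%:R * p by rewrite mulr_gt0.
rewrite -(ler_pM2l np_gt0) mulfV ?gt_eqF // mulr_sumr.
have binom1 := exprDn (1 - p) p n.+1; rewrite subrK expr1n big_ord_recl /= in binom1.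
rewrite [X in _ <= X]binom1; apply: ler_wpDl.
  by rewrite bin0 expr0 mulr1 exprn_ge0 ?subr_ge0.
apply: ler_sum => s _; rewrite /bump /= add1n subSS -[_ *+ 'C(n.+1, s.+1)]mulr_natl.
have -> : 'C(n.+1, s.+1)%:R = n.+1%:R * 'C(n, s)%:R / s.+1%:R :> R.
  by rewrite -natrM (mul_bin_diag n.+1 s) natrM mulrAC divff ?mul1r ?pnatr_eq0.
by rewrite exprS le_eqVlt; apply/predU1l; ring.
Qed.

Lemma sumr_binomial_pmf (p : R) n :
  \sum_(s < n.+1) 'C(n, s)%:R * p ^+ s * (1 - p) ^+ (n - s) = 1.
Proof.
rewrite -[RHS](expr1n _ n) -[X in X ^+ n](subrK p) exprDn.
by apply: eq_bigr => s _; rewrite -mulr_natl; ring.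
Qed.

End BinomialSums.

Section BinomialBounds.
Variable R : realFieldType.

Lemma subr_mul_exprDn (A : comAlgType R) (u v : A) s :
  (u - v) * (u + v) ^+ s *+ s.+1 =
  \sum_(j < s.+2) ('C(s.+1, j)%:R * (2 * j%:R - s.+1%:R)) *: (u ^+ j * v ^+ (s.+1 - j)).
Proof.
have binom : (u + v) ^+ s.+1 = \sum_(j < s.+2) 'C(s.+1, j)%:R *: (u ^+ j * v ^+ (s.+1 - j)).
  by rewrite addrC exprDn; apply: eq_bigr => j _; rewrite scaler_nat mulrC.
have mean : u * (u + v) ^+ s *+ s.+1 =
    \sum_(j < s.+2) (j * 'C(s.+1, j))%:R *: (u ^+ j * v ^+ (s.+1 - j)).
  rewrite big_ord_recl mul0n scale0r add0r addrC exprDn mulr_sumr -sumrMnl.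
  apply: eq_bigr => j _; rewrite !lift0 subSS -(mul_bin_diag s.+1) mulnC.
  by rewrite scaler_nat mulrnA mulrnAr exprS mulrCA mulrC.
have -> : (u - v) * (u + v) ^+ s = u * (u + v) ^+ s *+ 2 - (u + v) ^+ s.+1.
  by rewrite exprS -mulrnAl -mulrBl mulr2n opprD addrACA subrr add0r.
rewrite mulrnBl -mulrnA mulnC mulrnA mean binom.
rewrite -[_ *+ 2]scaler_nat -[_ *+ s.+1]scaler_nat !scaler_sumr -sumrB.
by apply: eq_bigr => j _; rewrite !scalerA -scalerBl natrM; congr (_ *: _); ring.
Qed.

Lemma ler_norm_amgm (x t m : R) : 0 < t -> 0 < m -> `|x| <= (t / m * x ^+ 2 + m / t) / 2.
Proof.
move=> t_gt0 m_gt0; rewrite -(real_normK (num_real x)).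
have -> : (t / m * `|x| ^+ 2 + m / t) / 2 = `|x| + (t * `|x| - m) ^+ 2 / (2 * t * m).
  by field; rewrite !gt_eqF.
by rewrite lerDl divr_ge0 ?sqr_ge0 // !mulr_ge0 // ltW.
Qed.

Lemma norm1_XnB_mul_XnD_exp a b s (t : R) : 0 < t ->
  norm1 (('X^a - 'X^b) * ('X^a + 'X^b) ^+ s) <= 2 ^+ s * (t / s.+1%:R + t^-1).
Proof.
move=> t_gt0; have m_gt0 : 0 < s.+1%:R :> R by rewrite ltr0Sn.
rewrite -(ler_pM2l m_gt0) -{1}(ger0_norm (ltW m_gt0)) -norm1Z scaler_nat.
rewrite subr_mul_exprDn; apply: le_trans (norm1_sum _ _ _) _.
under eq_bigr do rewrite norm1Z -!exprM -exprD norm1Xn mulr1.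
under eq_bigr do rewrite normrM normr_nat.
apply: (le_trans (y := \sum_(j < s.+2) 'C(s.+1, j)%:R *
    ((t / s.+1%:R * (2 * j%:R - s.+1%:R) ^+ 2 + s.+1%:R / t) / 2))).
  by apply: ler_sum => j _; rewrite ler_wpM2l ?ler0n ?ler_norm_amgm.
set m := s.+1%:R.
have -> : \sum_(j < s.+2) 'C(s.+1, j)%:R * ((t / m * (2 * j%:R - m) ^+ 2 + m / t) / 2) =
    (t / m * \sum_(j < s.+2) 'C(s.+1, j)%:R * (2 * j%:R - m) ^+ 2
     + m / t * \sum_(j < s.+2) 'C(s.+1, j)%:R) / 2.
  by rewrite !mulr_sumr -big_split /= mulr_suml; apply: eq_bigr => j _; ring.
rewrite sumr_bin_centered_sqr sumr_bin exprS le_eqVlt; apply/predU1l.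
by field; rewrite gt_eqF //= nat1r pnatr_eq0.
Qed.

Lemma norm1_XnB_mul_expZ_prod (I : finType) a b (d t : R) (r : I -> {poly R})
    (J : {set I}) :
  0 <= d -> 2 * d <= 1 -> 0 < t ->
  (forall i, r i \is a polyOver Num.nneg) -> (forall i, (r i).[1] = 1 - 2 * d) ->
  norm1 (('X^a - 'X^b) * ((d *: ('X^a + 'X^b)) ^+ #|J| * \prod_(i in ~: J) r i))
    <= (2 * d) ^+ #|J| * (1 - 2 * d) ^+ (#|I| - #|J|) * (t / #|J|.+1%:R + t^-1).
Proof.
move=> d_ge0 d_le t_gt0 r_nneg r1; rewrite mulrA; apply: le_trans (norm1M _ _) _.
have -> : norm1 (\prod_(i in ~: J) r i) = (1 - 2 * d) ^+ (#|I| - #|J|).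
  rewrite norm1_nneg ?polyOver_nneg_prod //.
  have -> : (\prod_(i in ~: J) r i).[1] = \prod_(i in ~: J) (r i).[1] by exact: horner_prod.
  by rewrite (eq_bigr _ (fun i _ => r1 i)) prodr_const -(cardsC J) addKn.
rewrite mulrAC; apply: ler_wpM2r; first by rewrite exprn_ge0 // subr_ge0.
rewrite exprZn -scalerAr norm1Z ger0_norm ?exprn_ge0 // exprMn [2 ^+ _ * _]mulrC -mulrA.
by apply: ler_wpM2l; rewrite ?exprn_ge0 ?norm1_XnB_mul_XnD_exp.
Qed.

Lemma norm1_XnB_mul_prod (I : finType) a b (d t : R) (g : I -> {poly R}) :
  0 < d -> 2 * d <= 1 -> 0 < t ->
  (forall i, g i - d *: ('X^a + 'X^b) \is a polyOver Num.nneg) ->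
  (forall i, (g i).[1] = 1) ->
  norm1 (('X^a - 'X^b) * \prod_i g i) <= t / (#|I|.+1%:R * (2 * d)) + t^-1.
Proof.
move=> d_gt0 d_le t_gt0 g_dom g1; set p := 2 * d; set n := #|I|.
pose r i := g i - d *: ('X^a + 'X^b).
pose F k := p ^+ k * (1 - p) ^+ (n - k) * (t / k.+1%:R + t^-1).
have r1 i : (r i).[1] = 1 - p by rewrite /r !hornerE g1 !expr1n /p; ring.
have -> : \prod_i g i = \prod_i (d *: ('X^a + 'X^b) + r i).
  by apply: eq_bigr => i _; rewrite /r addrC subrK.
rewrite prodrDl_set mulr_sumr; apply: le_trans (norm1_sum _ _ _) _.
apply: le_trans (_ : _ <= \sum_(J : {set I}) F #|J|) _.
  by apply: ler_sum => J _; apply: norm1_XnB_mul_expZ_prod => //; exact: ltW.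
rewrite sum_set_card.
have -> : \sum_(s < n.+1) F s *+ 'C(n, s) =
    t * \sum_(s < n.+1) 'C(n, s)%:R * p ^+ s * (1 - p) ^+ (n - s) / s.+1%:R
    + t^-1 * \sum_(s < n.+1) 'C(n, s)%:R * p ^+ s * (1 - p) ^+ (n - s).
  by rewrite !mulr_sumr -big_split /=; apply: eq_bigr => s _; rewrite -mulr_natl /F; ring.
rewrite sumr_binomial_pmf mulr1 lerD2r; apply: ler_wpM2l; first exact: ltW.
by apply: sumr_binomial_pmf_div_succ; rewrite mulr_gt0.
Qed.

End BinomialBounds.

Definition radix (q B : nat) (k : 'I_q -> nat) : nat := (\sum_(c < q) k c * B ^ c)%N.

Lemma radix_inj q B (k1 k2 : 'I_q -> nat) :
  (forall c, k1 c < B)%N -> (forall c, k2 c < B)%N -> radix B k1 = radix B k2 -> k1 =1 k2.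
Proof.
elim: q k1 k2 => [|q IH] k1 k2 k1_lt k2_lt eq_radix c; first by case: c.
have B_gt0 : (0 < B)%N by apply: leq_ltn_trans (k1_lt ord0).
have radixS (k : 'I_q.+1 -> nat) : radix B k = (k ord0 + radix B (k \o lift ord0) * B)%N.
  rewrite /radix big_ord_recl expn0 muln1 big_distrl; congr addn.
  by apply: eq_bigr => i _; rewrite lift0 expnS mulnCA [RHS]mulnC.
rewrite !radixS in eq_radix.
have eq0 : k1 ord0 = k2 ord0.
  by have := congr1 (modn^~ B) eq_radix; rewrite /= ![(_ + _ * B)%N]addnC !modnMDl !modn_small.
move: eq_radix; rewrite eq0 => /addnI /eqP; rewrite eqn_mul2r gtn_eqF //= => /eqP eq_rest.
have [j ->|->] := unliftP ord0 c; last exact: eq0.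
exact: (IH _ _ (fun i => k1_lt _) (fun i => k2_lt _) eq_rest).
Qed.

Lemma sum_tnth_count (T : finType) m (y : m.-tuple T) (f : T -> nat) :
  (\sum_(i < m) f (tnth y i) = \sum_c count_mem c y * f c)%N.
Proof.
transitivity (\sum_(i < m) \sum_c (tnth y i == c) * f c)%N.
  apply: eq_bigr => i _; rewrite (bigD1 (tnth y i)) //= eqxx mul1n big1 ?addn0 // => c.
  by rewrite eq_sym => /negbTE ->.
rewrite exchange_big; apply: eq_bigr => c _.
rewrite -big_distrl -sum1_count big_tuple [in RHS]big_mkcond /=.
by congr muln; apply: eq_bigr => i _; case: (_ == c).
Qed.

Lemma prod_scaleXn (R : comNzRingType) (I : finType) (c : I -> R) (e : I -> nat) :
  \prod_i (c i *: 'X^(e i)) = (\prod_i c i) *: 'X^(\sum_i e i) :> {poly R}.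
Proof.
under eq_bigr do rewrite -mul_polyC.
by rewrite big_split /= -rmorph_prod prodrXr mul_polyC.
Qed.

Lemma exists_pos_lbound (R : realDomainType) (T : finType) (f : T -> R) :
  (forall x, 0 < f x) -> exists mu, [/\ 0 < mu, mu <= 1 & forall x, mu <= f x].
Proof.
move=> f_gt0; exists (\big[Num.min/1]_x f x); split.
- by apply: (big_ind (fun y => 0 < y)) => // y z; rewrite lt_min => -> ->.
- by elim/big_rec: _ => // x y _ y_le1; rewrite ge_min y_le1 orbT.
- by move=> x; rewrite (bigD1 x) //= ge_min lexx.
Qed.

Section WordPolynomial.
Variables (R : realType) (q : nat) (U : 'M[R]_q) (B : nat).

Definition symbol_poly (e : 'I_q) : {poly R} := \sum_c U e c *: 'X^(B ^ c).

Definition word_poly m (z : m.-tuple 'I_q) : {poly R} := \prod_(i < m) symbol_poly (tnth z i).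

Lemma word_polyE m (z : m.-tuple 'I_q) :
  word_poly z = \sum_(y : m.-tuple 'I_q) chan_prob U z y *: 'X^(radix B (composition y)).
Proof.
rewrite /word_poly /symbol_poly bigA_distr_bigA /=.
rewrite (reindex (fun y : m.-tuple 'I_q => [ffun i => tnth y i])) /=; last first.
  exists (fun f : {ffun 'I_m -> 'I_q} => [tuple f i | i < m]) => [y _ | f _].
    by apply: eq_from_tnth => i; rewrite tnth_mktuple ffunE.
  by apply/ffunP => i; rewrite ffunE tnth_mktuple.
apply: eq_bigr => y _; under eq_bigr do rewrite ffunE.
by rewrite prod_scaleXn /radix -sum_tnth_count.
Qed.

Lemma W_coef_word_poly m (z : m.-tuple 'I_q) (k : 'I_q -> nat) :
  (m < B)%N -> (forall c, k c <= m)%N -> W U z k = (word_poly z)`_(radix B k).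
Proof.
move=> ltmB k_le; rewrite word_polyE coef_sum /W big_mkcond; apply: eq_bigr => y _.
have count_lt c : (composition y c < B)%N.
  by apply: leq_ltn_trans ltmB; rewrite -[X in (_ <= X)%N](size_tuple y) count_size.
have -> : [forall c, composition y c == k c] = (radix B (composition y) == radix B k).
  apply/forallP/eqP => [eq_k | /radix_inj eq_k c]; last first.
    by apply/eqP/eq_k => // c'; apply: leq_ltn_trans ltmB.
  by apply: eq_bigr => c _; rewrite (eqP (eq_k c)).
by rewrite coefZ coefXn eq_sym; case: eqP; rewrite ?mulr1 ?mulr0.
Qed.

Lemma dTV_W_le_norm1 m (z z' : m.-tuple 'I_q) :
  (m < B)%N -> dTV_W U z z' <= 2^-1 * norm1 (word_poly z - word_poly z').
Proof.
move=> ltmB; apply: ler_wpM2l; first by rewrite invr_ge0 ler0n.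
have coefW (y : m.-tuple 'I_q) (k : {ffun 'I_q -> 'I_m.+1}) :
    W U y (fun c => k c) = (word_poly y)`_(radix B (fun c => k c)).
  by apply: W_coef_word_poly => // c; rewrite -ltnS.
under eq_bigr do rewrite !coefW -coefB.
apply: (sum_norm_coef_inj_le (phi := fun k : {ffun _ -> 'I_m.+1} => radix B (fun c => k c))).
move=> k1 k2 /radix_inj eq_k; apply/ffunP => c; apply/val_inj/eq_k => i;
  exact: leq_trans (ltn_ord _) ltmB.
Qed.

Lemma word_poly_rcons n (x : n.-tuple 'I_q) a :
  word_poly [tuple of rcons x a] = word_poly x * symbol_poly a.
Proof.
rewrite /word_poly big_ord_recr /= (tnth_nth a) nth_rcons size_tuple ltnn eqxx.
congr (_ * _); apply: eq_bigr => i _.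
by rewrite !(tnth_nth a) /= nth_rcons size_tuple ltn_ord.
Qed.

Lemma symbol_poly_sub_nneg (d : R) (e c a : 'I_q) :
  0 <= d -> (forall j, 2 * d <= U e j) ->
  symbol_poly e - d *: ('X^(B ^ c) + 'X^(B ^ a)) \is a polyOver Num.nneg.
Proof.
move=> d_ge0 U_ge.
have -> : symbol_poly e - d *: ('X^(B ^ c) + 'X^(B ^ a)) =
    \sum_j (U e j - d * (j == c)%:R - d * (j == a)%:R) *: 'X^(B ^ j).
  under [RHS]eq_bigr do rewrite !scalerBl.
  rewrite !sumrB scalerDr opprD addrA; congr (_ - _ - _).
    rewrite (bigD1 c) //= eqxx mulr1 big1 ?addr0 // => j /negbTE ->.
    by rewrite mulr0 scale0r.
  rewrite (bigD1 a) //= eqxx mulr1 big1 ?addr0 // => j /negbTE ->.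
  by rewrite mulr0 scale0r.
apply/polyOverP => i; rewrite coef_sum nnegrE; apply: sumr_ge0 => j _.
rewrite coefZ coefXn mulr_ge0 ?ler0n //; have := U_ge j.
by case: (j == c); case: (j == a); rewrite ?mulr0 ?mulr1 => ?; lra.
Qed.

Hypothesis U_row1 : forall i, \sum_j U i j = 1.

Lemma symbol_poly1 e : (symbol_poly e).[1] = 1.
Proof.
rewrite -[RHS](U_row1 e) horner_sum; apply: eq_bigr => c _.
by rewrite hornerZ hornerXn expr1n mulr1.
Qed.

Lemma symbol_polyB a b e :
  symbol_poly a - symbol_poly b = \sum_c (U a c - U b c) *: ('X^(B ^ c) - 'X^(B ^ e)).
Proof.
have sum0 : \sum_c (U a c - U b c) = 0 by rewrite sumrB !U_row1 subrr.
under [RHS]eq_bigr do rewrite scalerBr.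
rewrite sumrB -scaler_suml sum0 scale0r subr0 -sumrB.
by apply: eq_bigr => c _; rewrite scalerBl.
Qed.

Lemma norm1_word_poly_symbol_polyB n (x : n.-tuple 'I_q) a b (mu t : R) :
  0 < mu <= 1 -> 0 < t -> (forall i j, mu <= U i j) ->
  norm1 (word_poly x * (symbol_poly a - symbol_poly b))
    <= 2 * (t / (n.+1%:R * mu) + t^-1).
Proof.
move=> /andP[mu_gt0 mu_le1] t_gt0 U_ge; set K := t / _ + _.
have norm1_c (c : 'I_q) : norm1 (('X^(B ^ c) - 'X^(B ^ a)) * word_poly x) <= K.
  have := @norm1_XnB_mul_prod _ 'I_n (B ^ c) (B ^ a) (mu / 2) t
    (fun i => symbol_poly (tnth x i)).
  rewrite card_ord (_ : 2 * (mu / 2) = mu); last by field.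
  apply=> // [|i|i]; first by rewrite divr_gt0.
    rewrite /=; apply: symbol_poly_sub_nneg => [|j]; first by rewrite divr_ge0 // ltW.
    by rewrite mulrC divfK ?pnatr_eq0.
  exact: symbol_poly1.
rewrite (symbol_polyB a b a) mulr_sumr; apply: le_trans (norm1_sum _ _ _) _.
apply: le_trans (_ : _ <= \sum_c (U a c + U b c) * K) _.
  apply: ler_sum => c _; rewrite -scalerAr norm1Z [word_poly x * _]mulrC.
  apply: ler_pM; rewrite ?norm1_ge0 ?norm1_c //.
  by apply: le_trans (ler_normB _ _) _; rewrite !ger0_norm ?(le_trans (ltW mu_gt0)).
by rewrite -mulr_suml big_split /= !U_row1.
Qed.

End WordPolynomial.

Lemma dTV_rcons_le (R : realType) q (U : 'M[R]_q) (mu : R) n (x : n.-tuple 'I_q) a b :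
  0 < mu <= 1 -> (forall i j, mu <= U i j) -> (forall i, \sum_j U i j = 1) -> (0 < n)%N ->
  dTV_W U [tuple of rcons x a] [tuple of rcons x b] <= (mu^-1 + 1) / Num.sqrt n%:R.
Proof.
move=> mu01 U_ge U_row1 n_gt0; have /andP[mu_gt0 _] := mu01.
set s := Num.sqrt n%:R; have s_gt0 : 0 < s by rewrite sqrtr_gt0 ltr0n.
have s2 : s ^+ 2 = n%:R by rewrite sqr_sqrtr ?ler0n.
apply: le_trans (dTV_W_le_norm1 (B := n.+2) _ _ _ (ltnSn _)) _.
rewrite !word_poly_rcons -mulrBr.
have half_ge0 : 0 <= 2^-1 :> R by rewrite invr_ge0.
have := norm1_word_poly_symbol_polyB n.+2 U_row1 x a b mu01 s_gt0 U_ge.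
move=> /(ler_wpM2l half_ge0) /le_trans; apply.
rewrite mulrA mulVf ?pnatr_eq0 // mul1r -natr1 -s2 -subr_ge0.
have -> : (mu^-1 + 1) / s - (s / ((s ^+ 2 + 1) * mu) + s^-1) = (s * ((s ^+ 2 + 1) * mu))^-1.
  by field; rewrite !gt_eqF ?addr_gt0 ?exprn_gt0.
by rewrite invr_ge0 !mulr_ge0 ?addr_ge0 ?exprn_ge0 // ltW.
Qed.

Lemma log2_powR_ge1 (R : realType) n (e : R) :
  (2 <= n)%N -> 0 <= e -> 1 <= log2 (n%:R : R) `^ e.
Proof.
move=> n_ge2 e_ge0; have ln2_gt0 : 0 < ln (2 : R) by rewrite ln_gt0 // ltr1n.
have log2_ge1 : 1 <= log2 (n%:R : R).
  by rewrite /log2 ler_pdivlMr // mul1r ler_ln ?posrE ?ltr0n ?ler_nat // (ltn_trans _ n_ge2).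
by have := ler_powR log2_ge1 e_ge0; rewrite powRr0.
Qed.

Unset Implicit Arguments.

Theorem lemma4 (R : realType) (q : nat) (U : 'M[R]_q) :
  (2 <= q)%N ->
  (forall i j, 0 < U i j) ->
  (forall i, \sum_j U i j = 1) ->
  exists C3 : R, exists N : nat, forall n : nat, (N <= n)%N ->
    forall (x : n.-tuple 'I_q) (a b : 'I_q), a != b ->
      dTV_W U [tuple of rcons x a] [tuple of rcons x b]
        <= C3 * (log2 (n%:R : R)) `^ ((q%:R - 2) / 2) / Num.sqrt (n%:R).
Proof.
move=> q_ge2 U_gt0 U_row1.
have [mu [mu_gt0 mu_le1 U_ge]] :=
  exists_pos_lbound (fun ij : 'I_q * 'I_q => U_gt0 ij.1 ij.2).
exists (mu^-1 + 1), 2%N => n n_ge2 x a b _.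
apply: le_trans (dTV_rcons_le x a b _ (fun i j => U_ge (i, j)) U_row1 _) _.
- by rewrite mu_gt0 mu_le1.
- exact: ltn_trans n_ge2.
rewrite ler_pM2r ?invr_gt0 ?sqrtr_gt0 ?ltr0n 1?(ltn_trans _ n_ge2) // ler_peMr //.
  by rewrite addr_ge0 ?invr_ge0 // ltW.
by rewrite log2_powR_ge1 // divr_ge0 // subr_ge0 ler_nat.
Qed.
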